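(* For every $q\in\mathbf H^1_{\mathbb H}$, $$\sup_{\gamma\in PSL(2,\mathfrak L)}\Re(\gamma(q))<\infty\qquad\text{and}\qquad \sup_{\gamma\in PSL(2,\mathfrak H)}\Re(\gamma(q))<\infty.$$
   Context: $\mathbb H$ is the real quaternions, $\mathbf H^1_{\mathbb H}=\{q:\Re q>0\}$. Quaternionic matrices act by $q\mapsto(aq+b)(cq+d)^{-1}$. $\Im\mathbb H(\mathbb Z)=\{b\mathbf i+c\mathbf j+d\mathbf k:b,c,d\in\mathbb Z\}$, $\tau_\omega(q)=q+\omega$, $T(q)=q^{-1}$. $PSL(2,\mathfrak L)$ is the group generated by $T$ and the $\tau_\omega$, $\omega\in\Im\mathbb H(\mathbb Z)$. For a Hurwitz unit $u$ (one of the 24 quaternions $\pm1,\pm\mathbf i,\pm\mathbf j,\pm\mathbf k,\frac12(\pm1\pm\mathbf i\pm\mathbf j\pm\mathbf k)$), $D_u$ is the map $q\mapsto uqu^{-1}$ (matrix $\mathrm{diag}(u,u)$); $PSL(2,\mathfrak H)$ is the group generated by $T$, the $\tau_\omega$ and all $D_u$. All these elements are represented by matrices with Hurwitz-integer entries satisfying the (BG) conditions $\bar A^tKA=K$, $K=\begin{pmatrix}0&1\\1&0\end{pmatrix}$. *)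

From Stdlib Require Import Reals.
Open Scope R_scope.

Record quat : Type := Quat { q0 : R; q1 : R; q2 : R; q3 : R }.

Definition qRe (q : quat) : R := q0 q.

Definition qadd (p q : quat) : quat :=
  Quat (q0 p + q0 q) (q1 p + q1 q) (q2 p + q2 q) (q3 p + q3 q).

(* Hamilton product: i^2 = j^2 = k^2 = ijk = -1 *)
Definition qmul (p q : quat) : quat :=
  Quat (q0 p * q0 q - q1 p * q1 q - q2 p * q2 q - q3 p * q3 q)
       (q0 p * q1 q + q1 p * q0 q + q2 p * q3 q - q3 p * q2 q)
       (q0 p * q2 q - q1 p * q3 q + q2 p * q0 q + q3 p * q1 q)
       (q0 p * q3 q + q1 p * q2 q - q2 p * q1 q + q3 p * q0 q).

Definition qnorm2 (q : quat) : R :=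
  q0 q * q0 q + q1 q * q1 q + q2 q * q2 q + q3 q * q3 q.

Definition qconj (q : quat) : quat := Quat (q0 q) (- q1 q) (- q2 q) (- q3 q).

(* multiplicative inverse (conj q / |q|^2); total, unspecified at 0 *)
Definition qinv (q : quat) : quat :=
  let n := qnorm2 q in Quat (q0 q / n) (- q1 q / n) (- q2 q / n) (- q3 q / n).

Definition qzero : quat := Quat 0 0 0 0.
Definition qone : quat := Quat 1 0 0 0.

Definition in_H1 (q : quat) : Prop := 0 < qRe q.

Definition in_ImHZ (w : quat) : Prop :=
  q0 w = 0 /\ exists b c d : Z, q1 w = IZR b /\ q2 w = IZR c /\ q3 w = IZR d.

Definition is_pm1_or_0 (x : R) : Prop := x = 1 \/ x = -1 \/ x = 0.
Definition is_pm_half (x : R) : Prop := x = 1/2 \/ x = -(1/2).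
Definition hurwitz_unit (u : quat) : Prop :=
  (u = Quat 1 0 0 0 \/ u = Quat (-1) 0 0 0 \/ u = Quat 0 1 0 0 \/ u = Quat 0 (-1) 0 0
   \/ u = Quat 0 0 1 0 \/ u = Quat 0 0 (-1) 0 \/ u = Quat 0 0 0 1 \/ u = Quat 0 0 0 (-1))
  \/ (is_pm_half (q0 u) /\ is_pm_half (q1 u) /\ is_pm_half (q2 u) /\ is_pm_half (q3 u)).

Record qmat : Type := QMat { ma : quat; mb : quat; mc : quat; md : quat }.

Definition mmul (A B : qmat) : qmat :=
  QMat (qadd (qmul (ma A) (ma B)) (qmul (mb A) (mc B)))
       (qadd (qmul (ma A) (mb B)) (qmul (mb A) (md B)))
       (qadd (qmul (mc A) (ma B)) (qmul (md A) (mc B)))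
       (qadd (qmul (mc A) (mb B)) (qmul (md A) (md B))).

Definition mid : qmat := QMat qone qzero qzero qone.

Definition mob (A : qmat) (q : quat) : quat :=
  qmul (qadd (qmul (ma A) q) (mb A)) (qinv (qadd (qmul (mc A) q) (md A))).

Definition matT : qmat := QMat qzero qone qone qzero.
Definition matTau (w : quat) : qmat := QMat qone w qzero qone.
Definition matD (u : quat) : qmat := QMat u qzero qzero u.

Inductive genL : qmat -> Prop :=
  | genL_T : genL matT
  | genL_tau : forall w, in_ImHZ w -> genL (matTau w).

Inductive genH : qmat -> Prop :=
  | genH_T : genH matT
  | genH_tau : forall w, in_ImHZ w -> genH (matTau w)
  | genH_D : forall u, hurwitz_unit u -> genH (matD u).

(* Subgroup generated by a generating set closed under inverses
   (T^{-1} = T, tau_w^{-1} = tau_{-w}, D_u^{-1} = D_{conj u}):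
   all finite products of generators. *)
Inductive generated (G : qmat -> Prop) : qmat -> Prop :=
  | gen_id : generated G mid
  | gen_mul : forall g M, G g -> generated G M -> generated G (mmul g M).

Definition PSL2_L (M : qmat) : Prop := generated genL M.
Definition PSL2_H (M : qmat) : Prop := generated genH M.

From Stdlib Require Import Reals Lra Lia Psatz ZArith.
Open Scope R_scope.

(* Every element [[a, b], [c, d]] of either group satisfies the (BG) relations
   and has Hurwitz-integer entries, since both properties hold for the
   generators and are stable under products.  The (BG) relations give
   Re g(q) = Re q / |cq + d|^2 and Re (conj c * d) = 0, hence
   |cq + d|^2 >= (Re q)^2 |c|^2.  The norm of a Hurwitz integer is an integer,
   so either c = 0 and |d| >= 1, whence Re g(q) <= Re q, or |c| >= 1, whence
   Re g(q) <= 1 / Re q. *)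

(* [qdot x y = Re (conj x * y)]. *)
Definition qdot (x y : quat) : R := q0 x * q0 y + q1 x * q1 y + q2 x * q2 y + q3 x * q3 y.

Lemma quat_ext x y :
  q0 x = q0 y -> q1 x = q1 y -> q2 x = q2 y -> q3 x = q3 y -> x = y.
Proof. destruct x, y; simpl; intros; subst; reflexivity. Qed.

Ltac quat_ring :=
  intros;
  lazymatch goal with |- @eq quat _ _ => apply quat_ext | _ => idtac end;
  repeat match goal with x : quat |- _ => destruct x end;
  unfold qdot, qnorm2, qone, qzero; simpl; ring.

Lemma qmul0l x : qmul qzero x = qzero. Proof. quat_ring. Qed.
Lemma qmul0r x : qmul x qzero = qzero. Proof. quat_ring. Qed.
Lemma qmul1l x : qmul qone x = x. Proof. quat_ring. Qed.
Lemma qadd0l x : qadd qzero x = x. Proof. quat_ring. Qed.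
Lemma qadd0r x : qadd x qzero = x. Proof. quat_ring. Qed.
Lemma qconj0 : qconj qzero = qzero. Proof. quat_ring. Qed.
Lemma qconj1 : qconj qone = qone. Proof. quat_ring. Qed.
Lemma qdot_conj x y : qdot (qconj x) (qconj y) = qdot x y. Proof. quat_ring. Qed.
Lemma qdot1r x : qdot x qone = q0 x. Proof. quat_ring. Qed.

Lemma qconj_mul_self x : qmul (qconj x) x = Quat (qnorm2 x) 0 0 0.
Proof. quat_ring. Qed.

Lemma qconj_mul_anticomm x y :
  qdot x y = 0 -> qadd (qmul (qconj x) y) (qmul (qconj y) x) = qzero.
Proof.
  intros Hxy.
  transitivity (Quat (2 * qdot x y) 0 0 0); [quat_ring |].
  rewrite Hxy, Rmult_0_r; reflexivity.
Qed.

Lemma qnorm2_ge0 x : 0 <= qnorm2 x.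
Proof. destruct x as [x0 x1 x2 x3]; unfold qnorm2; simpl; nra. Qed.

Lemma qnorm2_eq0 x : qnorm2 x = 0 -> x = qzero.
Proof.
  destruct x as [x0 x1 x2 x3]; unfold qnorm2; simpl; intros Hx.
  apply quat_ext; simpl; nra.
Qed.

Lemma qnorm2_affine c d q :
  qnorm2 (qadd (qmul c q) d)
  = q0 q * q0 q * qnorm2 c + qnorm2 (qadd (qmul c (Quat 0 (q1 q) (q2 q) (q3 q))) d)
    + 2 * q0 q * qdot c d.
Proof. quat_ring. Qed.

Lemma qdot_affine a b c d q :
  qdot (qadd (qmul a q) b) (qadd (qmul c q) d)
  = qnorm2 q * qdot a c + qdot b d
    + qdot q (qadd (qmul (qconj a) d) (qmul (qconj c) b)).
Proof. quat_ring. Qed.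

Lemma re_qmul_qinv x y : q0 (qmul x (qinv y)) = qdot x y / qnorm2 y.
Proof. destruct x, y; unfold qinv, qdot, qnorm2; simpl; unfold Rdiv; ring. Qed.

(* Coordinates in the Z-basis [(1+i+j+k)/2, i, j, k] of the Hurwitz order. *)
Definition hurwitz (h : quat) : Prop := exists n0 n1 n2 n3 : Z,
  q0 h = IZR n0 / 2 /\ q1 h = IZR n0 / 2 + IZR n1 /\
  q2 h = IZR n0 / 2 + IZR n2 /\ q3 h = IZR n0 / 2 + IZR n3.

Lemma hurwitz_add p h : hurwitz p -> hurwitz h -> hurwitz (qadd p h).
Proof.
  intros (m0 & m1 & m2 & m3 & E0 & E1 & E2 & E3) (n0 & n1 & n2 & n3 & F0 & F1 & F2 & F3).
  exists (m0 + n0)%Z, (m1 + n1)%Z, (m2 + n2)%Z, (m3 + n3)%Z.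
  destruct p as [p0 p1 p2 p3], h as [h0 h1 h2 h3]; cbn [q0 q1 q2 q3 qadd] in *; subst.
  rewrite !plus_IZR; repeat split; field.
Qed.

Lemma hurwitz_mul p h : hurwitz p -> hurwitz h -> hurwitz (qmul p h).
Proof.
  intros (m0 & m1 & m2 & m3 & E0 & E1 & E2 & E3) (n0 & n1 & n2 & n3 & F0 & F1 & F2 & F3).
  exists (- m0*n0 - m0*n1 - m1*n0 - m0*n2 - m2*n0 - m0*n3 - m3*n0
          - 2*m1*n1 - 2*m2*n2 - 2*m3*n3)%Z,
         (m0*n0 + m0*n1 + m1*n0 + m0*n3 + m2*n0 + m2*n3 - m3*n2
          + m1*n1 + m2*n2 + m3*n3)%Z,
         (m0*n0 + m0*n1 + m0*n2 + m2*n0 + m3*n0 + m3*n1 - m1*n3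
          + m1*n1 + m2*n2 + m3*n3)%Z,
         (m0*n0 + m0*n2 + m0*n3 + m1*n0 + m3*n0 + m1*n2 - m2*n1
          + m1*n1 + m2*n2 + m3*n3)%Z.
  destruct p as [p0 p1 p2 p3], h as [h0 h1 h2 h3]; cbn [q0 q1 q2 q3 qmul] in *; subst.
  repeat rewrite ?plus_IZR, ?minus_IZR, ?mult_IZR, ?opp_IZR; repeat split; field.
Qed.

Lemma hurwitz_lipschitz (x0 x1 x2 x3 : Z) : hurwitz (Quat (IZR x0) (IZR x1) (IZR x2) (IZR x3)).
Proof.
  exists (2 * x0)%Z, (x1 - x0)%Z, (x2 - x0)%Z, (x3 - x0)%Z; cbn [q0 q1 q2 q3].
  rewrite !minus_IZR, mult_IZR; repeat split; field.
Qed.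

Lemma hurwitz0 : hurwitz qzero. Proof. exact (hurwitz_lipschitz 0 0 0 0). Qed.
Lemma hurwitz1 : hurwitz qone. Proof. exact (hurwitz_lipschitz 1 0 0 0). Qed.

Lemma hurwitz_qnorm2_int h : hurwitz h -> exists k : Z, qnorm2 h = IZR k.
Proof.
  intros (n0 & n1 & n2 & n3 & E0 & E1 & E2 & E3).
  exists (n0*n0 + n0*(n1 + n2 + n3) + n1*n1 + n2*n2 + n3*n3)%Z.
  destruct h as [h0 h1 h2 h3]; unfold qnorm2; cbn [q0 q1 q2 q3] in *; subst.
  repeat rewrite ?plus_IZR, ?mult_IZR; field.
Qed.

Lemma hurwitz_qnorm2_gap h : hurwitz h -> h = qzero \/ 1 <= qnorm2 h.
Proof.
  intros Hh; destruct (hurwitz_qnorm2_int h Hh) as [k Hk].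
  pose proof (qnorm2_ge0 h) as Hge; rewrite Hk in Hge; apply le_IZR in Hge.
  destruct (Z.eq_dec k 0) as [->|Hk0].
  - left; apply qnorm2_eq0; exact Hk.
  - right; rewrite Hk; apply IZR_le; lia.
Qed.

Lemma ImHZ_hurwitz w : in_ImHZ w -> hurwitz w.
Proof.
  intros [H0 (b & c & d & H1 & H2 & H3)].
  destruct w; simpl in *; subst; exact (hurwitz_lipschitz 0 b c d).
Qed.

Lemma pm_half_diff x y : is_pm_half x -> is_pm_half y -> exists k : Z, y = x + IZR k.
Proof.
  intros [-> | ->] [-> | ->];
    [exists 0%Z | exists (-1)%Z | exists 1%Z | exists 0%Z]; simpl; lra.
Qed.

Lemma hurwitz_unit_hurwitz u : hurwitz_unit u -> hurwitz u.
Proof.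
  intros [H | (H0 & H1 & H2 & H3)].
  - repeat destruct H as [H | H]; subst;
      first [exact (hurwitz_lipschitz 1 0 0 0) | exact (hurwitz_lipschitz (-1) 0 0 0)
            | exact (hurwitz_lipschitz 0 1 0 0) | exact (hurwitz_lipschitz 0 (-1) 0 0)
            | exact (hurwitz_lipschitz 0 0 1 0) | exact (hurwitz_lipschitz 0 0 (-1) 0)
            | exact (hurwitz_lipschitz 0 0 0 1) | exact (hurwitz_lipschitz 0 0 0 (-1))].
  - destruct (pm_half_diff _ _ H0 H1) as [k1 E1].
    destruct (pm_half_diff _ _ H0 H2) as [k2 E2].
    destruct (pm_half_diff _ _ H0 H3) as [k3 E3].
    destruct H0 as [E0 | E0]; [exists 1%Z, k1, k2, k3 | exists (-1)%Z, k1, k2, k3];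
      simpl; repeat split; lra.
Qed.

Lemma hurwitz_unit_qnorm2 u : hurwitz_unit u -> qnorm2 u = 1.
Proof.
  unfold qnorm2; intros [H | (H0 & H1 & H2 & H3)].
  - repeat destruct H as [H | H]; subst; simpl; ring.
  - destruct H0 as [-> | ->], H1 as [-> | ->], H2 as [-> | ->], H3 as [-> | ->]; field.
Qed.

Definition mconj (A : qmat) : qmat :=
  QMat (qconj (ma A)) (qconj (mc A)) (qconj (mb A)) (qconj (md A)).

(* The (BG) condition [conj(A)^T K A = K], entrywise; the (2,1) entry is the
   conjugate of the (1,2) one. *)
Definition kunitary (A : qmat) : Prop :=
  qdot (ma A) (mc A) = 0 /\ qdot (mb A) (md A) = 0 /\
  qadd (qmul (qconj (ma A)) (md A)) (qmul (qconj (mc A)) (mb A)) = qone.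

Lemma diag_form_mmul a1 b1 c1 d1 a2 c2 :
  qdot (qadd (qmul a1 a2) (qmul b1 c2)) (qadd (qmul c1 a2) (qmul d1 c2))
  = qnorm2 a2 * qdot a1 c1 + qnorm2 c2 * qdot b1 d1
    + qdot a2 (qmul (qadd (qmul (qconj a1) d1) (qmul (qconj c1) b1)) c2).
Proof. quat_ring. Qed.

Lemma offdiag_form_mmul a1 b1 c1 d1 a2 b2 c2 d2 :
  qadd (qmul (qconj (qadd (qmul a1 a2) (qmul b1 c2))) (qadd (qmul c1 b2) (qmul d1 d2)))
       (qmul (qconj (qadd (qmul c1 a2) (qmul d1 c2))) (qadd (qmul a1 b2) (qmul b1 d2)))
  = qadd (qadd (qmul (qconj a2) (qmul (qadd (qmul (qconj a1) c1) (qmul (qconj c1) a1)) b2))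
               (qmul (qconj c2) (qmul (qadd (qmul (qconj b1) d1) (qmul (qconj d1) b1)) d2)))
         (qadd (qmul (qconj a2) (qmul (qadd (qmul (qconj a1) d1) (qmul (qconj c1) b1)) d2))
               (qmul (qconj c2)
                  (qmul (qconj (qadd (qmul (qconj a1) d1) (qmul (qconj c1) b1))) b2))).
Proof. quat_ring. Qed.

Lemma kunitary_mmul A B : kunitary A -> kunitary B -> kunitary (mmul A B).
Proof.
  destruct A as [a1 b1 c1 d1], B as [a2 b2 c2 d2]; unfold kunitary, mmul; simpl.
  intros (Hac1 & Hbd1 & Hk1) (Hac2 & Hbd2 & Hk2).
  rewrite !diag_form_mmul, offdiag_form_mmul, Hac1, Hbd1, Hk1, qconj1, !qmul1l, Hac2, Hbd2, Hk2.
  rewrite (qconj_mul_anticomm _ _ Hac1), (qconj_mul_anticomm _ _ Hbd1), !qmul0l, !qmul0r.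
  rewrite !qadd0l; repeat split; ring.
Qed.

Lemma mconj_mmul A B : mconj (mmul A B) = mmul (mconj B) (mconj A).
Proof.
  destruct A as [a1 b1 c1 d1], B as [a2 b2 c2 d2]; unfold mconj, mmul; simpl.
  f_equal; quat_ring.
Qed.

(* [conj(A)^T K A = K] together with [A K conj(A)^T = K]; the latter supplies
   [Re (conj c * d) = 0], which the former only implies via the inverse of A. *)
Definition bg (A : qmat) : Prop := kunitary A /\ kunitary (mconj A).

Lemma bg_mmul A B : bg A -> bg B -> bg (mmul A B).
Proof.
  intros [HA HA'] [HB HB']; split; [exact (kunitary_mmul _ _ HA HB) |].
  rewrite mconj_mmul; exact (kunitary_mmul _ _ HB' HA').
Qed.

Lemma bg_T : bg matT.
Proof. unfold bg, kunitary, matT, mconj; simpl; repeat split; quat_ring. Qed.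

Lemma bg_tau w : q0 w = 0 -> bg (matTau w).
Proof.
  destruct w as [w0 w1 w2 w3]; simpl; intros ->.
  unfold bg, kunitary, matTau, mconj; simpl; repeat split; quat_ring.
Qed.

Lemma bg_D u : qnorm2 u = 1 -> bg (matD u).
Proof.
  intros Hu; unfold bg, kunitary, matD, mconj; simpl.
  rewrite qconj0, !qmul0l, !qmul0r, qadd0r, qconj_mul_self.
  replace (qmul (qconj (qconj u)) (qconj u)) with (qmul (qconj u) u) by quat_ring.
  rewrite qconj_mul_self, Hu; repeat split; quat_ring.
Qed.

Definition hurwitz_mat (A : qmat) : Prop :=
  hurwitz (ma A) /\ hurwitz (mb A) /\ hurwitz (mc A) /\ hurwitz (md A).

Lemma hurwitz_mat_mmul A B : hurwitz_mat A -> hurwitz_mat B -> hurwitz_mat (mmul A B).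
Proof.
  intros (Ha & Hb & Hc & Hd) (Ka & Kb & Kc & Kd).
  repeat split; apply hurwitz_add; apply hurwitz_mul; assumption.
Qed.

Definition hurwitz_bg (A : qmat) : Prop := bg A /\ hurwitz_mat A.

Lemma generated_ind (G P : qmat -> Prop) :
  P mid -> (forall A B, P A -> P B -> P (mmul A B)) -> (forall g, G g -> P g) ->
  forall M, generated G M -> P M.
Proof. intros Hid Hmul HG M HM; induction HM; auto. Qed.

Lemma generated_mono (G G' : qmat -> Prop) M :
  (forall g, G g -> G' g) -> generated G M -> generated G' M.
Proof. intros HG HM; induction HM; constructor; auto. Qed.

Lemma hurwitz_bg_mid : hurwitz_bg mid.
Proof.
  split; [unfold bg, kunitary, mid, mconj; simpl; repeat split; quat_ring |].
  repeat split; simpl; auto using hurwitz0, hurwitz1.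
Qed.

Lemma hurwitz_bg_mmul A B : hurwitz_bg A -> hurwitz_bg B -> hurwitz_bg (mmul A B).
Proof.
  intros [HA HhA] [HB HhB]; split; auto using bg_mmul, hurwitz_mat_mmul.
Qed.

Lemma genH_hurwitz_bg g : genH g -> hurwitz_bg g.
Proof.
  intros [| w Hw | u Hu]; split.
  - exact bg_T.
  - repeat split; simpl; auto using hurwitz0, hurwitz1.
  - exact (bg_tau w (proj1 Hw)).
  - repeat split; simpl; auto using hurwitz0, hurwitz1, ImHZ_hurwitz.
  - exact (bg_D u (hurwitz_unit_qnorm2 u Hu)).
  - repeat split; simpl; auto using hurwitz0, hurwitz_unit_hurwitz.
Qed.

Lemma PSL2_H_hurwitz_bg M : PSL2_H M -> hurwitz_bg M.
Proof.
  apply generated_ind; auto using hurwitz_bg_mid, hurwitz_bg_mmul, genH_hurwitz_bg.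
Qed.

Lemma PSL2_L_PSL2_H M : PSL2_L M -> PSL2_H M.
Proof. apply generated_mono; intros g []; constructor; assumption. Qed.

Lemma re_mob A q :
  kunitary A -> qRe (mob A q) = qRe q / qnorm2 (qadd (qmul (mc A) q) (md A)).
Proof.
  intros (Hac & Hbd & Hk); unfold mob, qRe.
  rewrite re_qmul_qinv, qdot_affine, Hac, Hbd, Hk, qdot1r.
  f_equal; ring.
Qed.

Lemma mob_denominator_ge A q : hurwitz_bg A ->
  1 <= qnorm2 (qadd (qmul (mc A) q) (md A)) \/
  q0 q * q0 q <= qnorm2 (qadd (qmul (mc A) q) (md A)).
Proof.
  destruct A as [a b c d]; simpl.
  intros (((_ & _ & Hk) & (_ & Hcd & _)) & (_ & _ & Hc & Hd)); simpl in Hk, Hcd.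
  rewrite qdot_conj in Hcd.
  destruct (hurwitz_qnorm2_gap c Hc) as [-> | Hc1].
  - left; rewrite qmul0l, qadd0l.
    destruct (hurwitz_qnorm2_gap d Hd) as [-> | Hd1]; [| exact Hd1].
    rewrite qconj0, !qmul0l, !qmul0r, qadd0l in Hk.
    apply (f_equal q0) in Hk; simpl in Hk; lra.
  - right; rewrite qnorm2_affine, Hcd.
    pose proof (qnorm2_ge0 (qadd (qmul c (Quat 0 (q1 q) (q2 q) (q3 q))) d)).
    nra.
Qed.

Lemma re_mob_le A q : hurwitz_bg A -> 0 < qRe q -> qRe (mob A q) <= qRe q + / qRe q.
Proof.
  intros HA Hs; rewrite (re_mob A q (proj1 (proj1 HA))).
  destruct (mob_denominator_ge A q HA) as [HN | HN]; unfold qRe in *;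
    set (s := q0 q) in *; set (N := qnorm2 _) in *.
  all: assert (HN0 : 0 < N) by nra.
  all: assert (s / N * N = s) by (field; lra).
  all: assert (0 <= s / N)
         by (unfold Rdiv; apply Rmult_le_pos; [lra | left; apply Rinv_0_lt_compat, HN0]).
  all: assert (0 < / s) by (apply Rinv_0_lt_compat, Hs).
  all: assert (s * / s = 1) by (field; lra).
  all: nra.
Qed.

Theorem corollary6p2 :
  forall q : quat, in_H1 q ->
    (exists C : R, forall g : qmat, PSL2_L g -> qRe (mob g q) <= C) /\
    (exists C : R, forall g : qmat, PSL2_H g -> qRe (mob g q) <= C).
Proof.
  intros q Hq.
  split; exists (qRe q + / qRe q); intros g Hg; apply re_mob_le; auto.
  - apply PSL2_H_hurwitz_bg, PSL2_L_PSL2_H, Hg.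
  - apply PSL2_H_hurwitz_bg, Hg.
Qed.
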